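(* Let $p$ be an odd prime, $a\ge1$ an integer, and $N$ a positive integer with $p\mid N$. Then \[ \sum_{b=0}^{a}\binom{a}{b}F_a^{(b)}(\emptyset,2N,p)=\frac{N}{a+1}\,Z_{a+1}(N,p). \]
   Context: For a prime $p$, $\mathcal P_p$ is the set of positive integers not divisible by $p$. $Z_n(N,p):=\sum\frac{1}{l_1\cdots l_n}$ over $(l_1,\dots,l_n)\in\mathcal P_p^n$ with $l_1+\dots+l_n=N$ (for $p\mid N$). Write $\bar1$ for a formal ''signed $1$'', $\varepsilon(1)=1$, $\varepsilon(\bar1)=-1$. For integers $a\ge b\ge0$, $d\ge0$, $\mathbf s=(s_1,\dots,s_d)\in\{1,\bar1\}^d$, and $M$ with $p\mid M$, \[F_a^{(b)}(\mathbf s,M,p):=\sum\frac{\varepsilon(s_1)^{i_1}\cdots\varepsilon(s_d)^{i_d}(-1)^{l_1+\dots+l_b}}{i_1\cdots i_d\,l_1\cdots l_a},\] the sum over integers $i_1,\dots,i_d$ and $l_1,\dots,l_a\in\mathcal P_p$ with $M>i_1>\dots>i_d>l_1+\dots+l_a$ and $M-i_1,\ i_1-i_2,\dots,i_{d-1}-i_d,\ i_d-(l_1+\dots+l_a)\in\mathcal P_p$ (when $d=0$ the conditions read $M>l_1+\dots+l_a$ and $M-(l_1+\dots+l_a)\in\mathcal P_p$). $\emptyset$ is the empty tuple. *)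

From HB Require Import structures.
From mathcomp Require Import all_boot all_order all_algebra.
Set Implicit Arguments. Unset Strict Implicit. Unset Printing Implicit Defensive.
Import Order.TTheory GRing.Theory Num.Theory.
Local Open Scope ring_scope.

(* Signed ones: a sign is encoded by a bool, [false] = 1, [true] = \bar1. *)
Definition eps (s : bool) : rat := if s then -1 else 1.

(* Membership in P_p: positive integer not divisible by p.
   (For prime p, ~~ (p %| n) already forces n > 0, but we state both.) *)
Definition inPp (p n : nat) : bool := (0 < n)%N && ~~ (p %| n)%N.

(* Z_n(N,p) = sum over (l_1..l_n) in P_p^n with l_1+..+l_n = N of 1/(l_1...l_n).
   Each l_k <= N, so l_k ranges over 'I_N.+1. *)
Definition Zsum (n N p : nat) : rat :=
  \sum_(l : {ffun 'I_n -> 'I_N.+1})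
     if [forall k, inPp p (l k)] && ((\sum_(k < n) (l k : nat))%N == N)
     then (\prod_(k < n) ((l k : nat)%:R : rat))^-1 else 0.

(* Indices i_1..i_d and l_1..l_a are all < M, hence range over 'I_M.
   The chain condition M > i_1 > ... > i_d > L (L = l_1+..+l_a) with all
   consecutive differences in P_p is expressed as a path. *)
Definition chain_ok (p : nat) : rel nat :=
  fun x y => (y < x)%N && inPp p (x - y).

Definition Fsum (a b : nat) (s : seq bool) (M p : nat) : rat :=
  \sum_(i : {ffun 'I_(size s) -> 'I_M})
  \sum_(l : {ffun 'I_a -> 'I_M})
     let L := (\sum_(k < a) (l k : nat))%N in
     if [forall k, inPp p (l k)] &&
        path (chain_ok p) M ([seq (i j : nat) | j <- enum 'I_(size s)] ++ [:: L])
     then (\prod_(j < size s) eps (nth false s j) ^+ (i j : nat))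
          * (-1) ^+ (\sum_(k < a | (k < b)%N) (l k : nat))%N
          / ((\prod_(j < size s) ((i j : nat)%:R : rat))
             * (\prod_(k < a) ((l k : nat)%:R : rat)))
     else 0.

From HB Require Import structures.
From mathcomp Require Import all_boot all_order all_algebra all_fingroup.
Import Order.TTheory GRing.Theory Num.Theory.
Local Open Scope ring_scope.
Set Implicit Arguments.
Unset Strict Implicit.

(* Expanding 'C(a, b) as the number of b-subsets of the a coordinates and
   using the symmetry of the summand, the left-hand side becomes
   \sum_l w(l) \prod_k (1 + (-1)^(l_k)), where w(l) = 1/(l_1...l_a) on the
   tuples l in P_p^a with 2N - (l_1 + ... + l_a) in P_p.  Only tuples with
   all entries even survive; writing l = 2m and using that p is odd, this is
   the sum of 1/(m_1...m_a) over m in P_p^a with N - (m_1 + ... + m_a) in P_p.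
   Adjoining that difference as a last part identifies these m with the
   compositions of N into a + 1 parts in P_p, weighted by
   (last part)/(product of parts); since the parts play symmetric roles,
   a + 1 times this sum is N Z_{a+1}(N, p). *)

Section FfunReindexing.

Variables (n : nat) (T : Type).

Lemma big_ffun_perm (R : Type) (idx : R) (op : Monoid.com_law idx)
    (s : {perm 'I_n}) (m : {ffun 'I_n -> T}) (f : T -> R) :
  \big[op/idx]_k f ([ffun k => m (s k)] k) = \big[op/idx]_k f (m k).
Proof.
rewrite [RHS](reindex_inj (@perm_inj _ s)).
by apply: eq_bigr => k _; rewrite ffunE.
Qed.

Lemma forall_ffun_perm (s : {perm 'I_n}) (m : {ffun 'I_n -> T}) (P : pred T) :
  [forall k, P ([ffun k => m (s k)] k)] = [forall k, P (m k)].
Proof.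
apply/forallP/forallP => Pm k; last by rewrite ffunE.
by have := Pm (s^-1 k)%g; rewrite ffunE permKV.
Qed.

End FfunReindexing.

Lemma sum_ffun_perm (R : nmodType) n (T : finType) (s : {perm 'I_n})
    (F : {ffun 'I_n -> T} -> R) :
  \sum_(m : {ffun 'I_n -> T}) F [ffun k => m (s k)] = \sum_m F m.
Proof.
apply/esym/(reindex_inj (h := fun m : {ffun 'I_n -> T} => [ffun k => m (s k)])).
move=> m1 m2 /ffunP eq_m; apply/ffunP => k.
by have := eq_m (s^-1 k)%g; rewrite !ffunE permKV.
Qed.

Lemma sum_over_injective_image (R : nmodType) (I J : finType) (h : I -> J)
    (F : J -> R) :
  injective h -> (forall j, F j != 0 -> j \in codom h) ->
  \sum_j F j = \sum_i F (h i).
Proof.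
move=> inj_h supp_F; rewrite (bigID (mem (codom h))) /=.
rewrite [X in _ + X]big1 ?addr0 => [|j]; last first.
  by apply: contraNeq => /supp_F.
by rewrite -big_uniq ?(map_inj_uniq inj_h) ?enum_uniq // big_image.
Qed.

Lemma exists_perm_onto_prefix n (S : {set 'I_n}) :
  exists s : {perm 'I_n}, forall k, (s k \in S) = (k < #|S|)%N.
Proof.
set sq := enum S ++ enum (~: S).
have size_sq : size sq = n by rewrite size_cat -!cardE cardsC card_ord.
have uniq_sq : uniq sq.
  rewrite cat_uniq !enum_uniq /= andbT; apply/hasPn => x.
  by rewrite !mem_enum inE => ->.
have inj_nth : injective (fun k : 'I_n => nth k sq k).
  move=> i j /eqP; rewrite (set_nth_default i j) ?size_sq // nth_uniq ?size_sq //.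
  by move=> /eqP /val_inj.
exists (perm inj_nth) => k; rewrite permE /sq nth_cat -cardE.
case: ltnP => Sk; first by rewrite -(mem_enum (mem S)) mem_nth // -cardE.
have : nth k (enum (~: S)) (k - #|S|) \in enum (~: S).
  by apply: mem_nth; rewrite -cardE ltn_subLR // cardsC card_ord.
by rewrite mem_enum inE => /negbTE.
Qed.

Lemma sum_sets_by_card (R : nmodType) n (G : {set 'I_n} -> R) :
  (forall (s : {perm 'I_n}) (S : {set 'I_n}), G [set k | s k \in S] = G S) ->
  \sum_(S : {set 'I_n}) G S = \sum_(b < n.+1) G [set k : 'I_n | (k < b)%N] *+ 'C(n, b).
Proof.
move=> G_perm.
have card_lt (S : {set 'I_n}) : (#|S| < n.+1)%N.
  by rewrite ltnS -[n in (_ <= n)%N]card_ord max_card.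
rewrite (partition_big (fun S => Ordinal (card_lt S)) xpredT) //=.
apply: eq_bigr => b _.
rewrite (eq_bigr (fun _ => G [set k : 'I_n | (k < b)%N])) => [|S /eqP <-]; last first.
  have [s s_prefix] := exists_perm_onto_prefix S.
  by rewrite -(G_perm s); congr G; apply/setP => k; rewrite !inE s_prefix.
rewrite sumr_const; congr (_ *+ _).
rewrite -[X in 'C(X, _)](card_ord n) -card_draws -cardsE.
by apply: eq_card => S; rewrite !inE.
Qed.

Lemma prod1D_sum_subsets (R : comPzSemiRingType) n (x : 'I_n -> R) :
  \prod_k (1 + x k) = \sum_(S : {set 'I_n}) \prod_(k in S) x k.
Proof.
rewrite (eq_bigr (fun k => x k + 1)) => [|k _]; last by rewrite addrC.
rewrite bigA_distr; apply: eq_bigr => S _.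
by rewrite [RHS]big_mkcond.
Qed.

Lemma double_ord_lt N (i : 'I_N) : (2 * i < 2 * N)%N.
Proof. by rewrite ltn_pmul2l. Qed.

Definition ord_double N (i : 'I_N) : 'I_(2 * N) := Ordinal (double_ord_lt i).

Definition double_ffun n N (m : {ffun 'I_n -> 'I_N}) : {ffun 'I_n -> 'I_(2 * N)} :=
  [ffun k => ord_double (m k)].

Lemma double_ffun_inj n N : injective (@double_ffun n N).
Proof.
move=> m1 m2 /ffunP eq_m; apply/ffunP => k; apply: val_inj.
by have /(congr1 val) /= /eqP := eq_m k; rewrite !ffunE eqn_pmul2l // => /eqP.
Qed.

Lemma sum_even_ffun (R : comPzRingType) n N (F : {ffun 'I_n -> 'I_(2 * N)} -> R) :
  \sum_l F l * \prod_k (1 + (-1) ^+ (l k : nat))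
  = 2 ^+ n * \sum_(m : {ffun 'I_n -> 'I_N}) F (double_ffun m).
Proof.
rewrite (sum_over_injective_image (@double_ffun_inj n N)) => [|l].
  rewrite mulr_sumr; apply: eq_bigr => m _; rewrite mulrC; congr (_ * _).
  rewrite -[n in 2 ^+ n](card_ord n) -prodr_const; apply: eq_bigr => k _.
  by rewrite ffunE /= -signr_odd oddM.
case: (boolP [forall k, ~~ odd (l k)]) => [/forallP l_even _ | /forallPn [k l_odd]].
  have half_lt k : ((l k)./2 < N)%N.
    have := ltn_ord (l k); rewrite -[X in (X < _)%N -> _]odd_double_half.
    by rewrite (negbTE (l_even k)) add0n -mul2n ltn_pmul2l.
  apply/codomP; exists [ffun k => Ordinal (half_lt k)]; apply/ffunP => k.
  apply: val_inj; rewrite !ffunE /=; move: (l_even k).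
  move: (nat_of_ord (l k)) => x /negbTE x_even.
  by rewrite mul2n -{1}[x]odd_double_half x_even.
rewrite (bigD1 k (P := xpredT)) //= -signr_odd (negbNE l_odd) subrr mul0r mulr0.
by rewrite eqxx.
Qed.

(* The summand of F_n^{(b)}(\emptyset, M, p) without its sign. *)
Definition Fweight (p n M : nat) (l : {ffun 'I_n -> 'I_M}) : rat :=
  if [forall k, inPp p (l k)] && chain_ok p M (\sum_k (l k : nat))%N
  then (\prod_k ((l k : nat)%:R : rat))^-1 else 0.
Arguments Fweight p {n M} l.

Lemma Fweight_perm p n M (s : {perm 'I_n}) (l : {ffun 'I_n -> 'I_M}) :
  Fweight p [ffun k => l (s k)] = Fweight p l.
Proof.
rewrite /Fweight (forall_ffun_perm _ _ (fun x : 'I_M => inPp p x)).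
by rewrite (big_ffun_perm _ _ _ (fun x : 'I_M => x : nat))
  (big_ffun_perm _ _ _ (fun x : 'I_M => (x : nat)%:R : rat)).
Qed.

Lemma Fsum_nil p a b M :
  Fsum a b [::] M p =
  \sum_(l : {ffun 'I_a -> 'I_M})
    Fweight p l * \prod_(k < a | (k < b)%N) (-1) ^+ (l k : nat).
Proof.
rewrite /Fsum /=; under eq_bigr => i _ do
  under eq_bigr => l _ do rewrite enum_ord0 /= andbT !big_ord0 !mul1r.
rewrite sumr_const card_ffun !card_ord expn0 mulr1n.
apply: eq_bigr => l _; rewrite /Fweight.
rewrite (big_morph (fun k => (-1) ^+ k) (exprD (-1)) (expr0 (-1))) mulrC.
by case: ifP; rewrite ?mul0r.
Qed.

Lemma binomial_sum_Fsum_nil p a M :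
  \sum_(b < a.+1) ('C(a, b)%:R : rat) * Fsum a b [::] M p
  = \sum_(l : {ffun 'I_a -> 'I_M})
      Fweight p l * \prod_k (1 + (-1) ^+ (l k : nat)).
Proof.
pose G (S : {set 'I_a}) := \sum_(l : {ffun 'I_a -> 'I_M})
  Fweight p l * \prod_(k in S) (-1) ^+ (l k : nat).
transitivity (\sum_(S : {set 'I_a}) G S); last first.
  rewrite exchange_big; apply: eq_bigr => l _.
  by rewrite prod1D_sum_subsets mulr_sumr.
rewrite sum_sets_by_card => [|s S].
  apply: eq_bigr => b _; rewrite mulr_natl Fsum_nil; congr (_ *+ _).
  by apply: eq_bigr => l _; congr (_ * _); apply: eq_bigl => k; rewrite inE.
rewrite /G -(sum_ffun_perm s); apply: eq_bigr => l _; rewrite Fweight_perm.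
congr (_ * _); rewrite [RHS](reindex_inj (@perm_inj _ s)) /=.
by apply: eq_big => k; rewrite ?inE // ffunE.
Qed.

Lemma inPp_double p x : odd p -> inPp p (2 * x) = inPp p x.
Proof. by move=> odd_p; rewrite /inPp muln_gt0 mulnC Gauss_dvdl ?coprimen2. Qed.

Lemma chain_ok_double p M x : odd p -> chain_ok p (2 * M) (2 * x) = chain_ok p M x.
Proof. by move=> odd_p; rewrite /chain_ok ltn_pmul2l // -mulnBr inPp_double. Qed.

Lemma Fweight_double p n N (m : {ffun 'I_n -> 'I_N}) : odd p ->
  Fweight p (double_ffun m) = Fweight p m / 2 ^+ n.
Proof.
move=> odd_p; rewrite /Fweight.
have -> : [forall k, inPp p (double_ffun m k)] = [forall k, inPp p (m k)].
  by apply: eq_forallb => k; rewrite ffunE inPp_double.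
have -> : (\sum_k (double_ffun m k : nat) = 2 * \sum_k (m k : nat))%N.
  by rewrite big_distrr; apply: eq_bigr => k _; rewrite ffunE.
rewrite chain_ok_double //; case: ifP => _; last by rewrite mul0r.
rewrite -invfM mulrC -[n in 2 ^+ n](card_ord n) -prodr_const -big_split /=.
by congr (_^-1); apply: eq_bigr => k _; rewrite ffunE natrM.
Qed.

Definition Pp_composition p n N (m : {ffun 'I_n -> 'I_N.+1}) : bool :=
  [forall k, inPp p (m k)] && (\sum_k (m k : nat) == N)%N.

Definition last_part_weight p n N (m : {ffun 'I_n.+1 -> 'I_N.+1}) : rat :=
  if Pp_composition p m then (m ord_max : nat)%:R / \prod_k ((m k : nat)%:R : rat)
  else 0.

Lemma mul_Zsum_last_part p n N :
  N%:R * Zsum n.+1 N p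
  = n.+1%:R * \sum_(m : {ffun 'I_n.+1 -> 'I_N.+1}) last_part_weight p m.
Proof.
pose w j (m : {ffun 'I_n.+1 -> 'I_N.+1}) : rat :=
  if Pp_composition p m then (m j : nat)%:R / \prod_k ((m k : nat)%:R : rat) else 0.
transitivity (\sum_j \sum_m w j m).
  rewrite /Zsum exchange_big mulr_sumr; apply: eq_bigr => m _.
  rewrite /w /Pp_composition.
  case: ifP => [/andP [_ /eqP sum_m] | _]; last by rewrite big1 ?mulr0.
  by rewrite -mulr_suml -natr_sum sum_m.
set last_sum := \sum_(m : {ffun _ -> _}) last_part_weight p m.
rewrite (eq_bigr (fun _ => last_sum)) => [|j _].
  by rewrite sumr_const card_ord mulr_natl.
rewrite /last_sum -[RHS](sum_ffun_perm (tperm j ord_max)); apply: eq_bigr => m _.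
rewrite /w /last_part_weight /Pp_composition ffunE tpermR.
rewrite (forall_ffun_perm _ _ (fun x : 'I_N.+1 => inPp p x)).
by rewrite (big_ffun_perm _ _ _ (fun x : 'I_N.+1 => x : nat))
  (big_ffun_perm _ _ _ (fun x : 'I_N.+1 => (x : nat)%:R : rat)).
Qed.

Definition complete_composition n N (m : {ffun 'I_n -> 'I_N}) :
  {ffun 'I_n.+1 -> 'I_N.+1} :=
  [ffun k => if unlift ord_max k is Some j then widen_ord (leqnSn N) (m j)
             else inord (N - \sum_j (m j : nat))].

Section CompleteComposition.

Variables (n N : nat) (m : {ffun 'I_n -> 'I_N}).

Lemma complete_composition_lift j :
  (complete_composition m (lift ord_max j) : nat) = m j.
Proof. by rewrite ffunE liftK. Qed.

Lemma complete_composition_last :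
  (complete_composition m ord_max : nat) = (N - \sum_j (m j : nat))%N.
Proof. by rewrite ffunE unlift_none inordK // ltnS leq_subr. Qed.

Lemma big_complete_composition (R : Type) (idx : R) (op : Monoid.com_law idx)
    (f : nat -> R) :
  \big[op/idx]_k f (complete_composition m k)
  = op (f (N - \sum_j (m j : nat))%N) (\big[op/idx]_j f (m j)).
Proof.
rewrite (bigD1_ord ord_max) //= complete_composition_last.
by congr (op _ _); apply: eq_bigr => j _; rewrite (complete_composition_lift j).
Qed.

Lemma forall_complete_composition (P : pred nat) :
  [forall k, P (complete_composition m k)]
  = [forall j, P (m j)] && P (N - \sum_j (m j : nat))%N.
Proof.
apply/forallP/andP => [Pm | [/forallP Pm P_last] k].
  split; last by have := Pm ord_max; rewrite complete_composition_last.
  by apply/forallP => j; have := Pm (lift ord_max j); rewrite complete_composition_lift.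
case: (unliftP ord_max k) => [j ->|->].
  by rewrite complete_composition_lift.
by rewrite complete_composition_last.
Qed.

Lemma last_part_weight_complete p :
  last_part_weight p (complete_composition m) = Fweight p m.
Proof.
rewrite /last_part_weight /Pp_composition /Fweight /chain_ok.
rewrite (forall_complete_composition (inPp p)).
rewrite (big_complete_composition _ id) (big_complete_composition _ (fun x => x%:R)).
rewrite complete_composition_last; set K := (\sum_j (m j : nat))%N.
case: (boolP (inPp p (N - K))) => [Pp_last | _]; last by rewrite !andbF.
have K_lt : (K < N)%N by move: Pp_last; rewrite /inPp subn_gt0 => /andP [].
rewrite K_lt /= subnK ?(ltnW K_lt) // eqxx !andbT; case: ifP => // _.
have last_neq0 : ((N - K)%:R : rat) != 0 by rewrite pnatr_eq0 -lt0n subn_gt0.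
by rewrite invfM mulrA mulfV // mul1r.
Qed.

End CompleteComposition.

Lemma complete_composition_inj n N : injective (@complete_composition n N).
Proof.
move=> m1 m2 eq_m; apply/ffunP => j; apply: val_inj.
by have := complete_composition_lift m1 j; rewrite eq_m complete_composition_lift.
Qed.

Lemma sum_last_part_weight p n N :
  \sum_(m : {ffun 'I_n.+1 -> 'I_N.+1}) last_part_weight p m
  = \sum_(m : {ffun 'I_n -> 'I_N}) Fweight p m.
Proof.
rewrite (sum_over_injective_image (@complete_composition_inj n N)) => [|mm].
  by apply: eq_bigr => m _; rewrite last_part_weight_complete.
rewrite /last_part_weight; case: ifP => // /andP [/forallP Pp_mm /eqP sum_mm] _.
have last_gt0 : (0 < mm ord_max)%N by have /andP [] := Pp_mm ord_max.
have part_lt (j : 'I_n) : (mm (lift ord_max j) < N)%N.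
  move: sum_mm; rewrite (bigD1_ord ord_max) //= (bigD1 j) //= => /eq_leq.
  by apply: leq_trans; rewrite addnCA -addn1 leq_add2l addn_gt0 last_gt0.
apply/codomP; exists [ffun j => Ordinal (part_lt j)].
apply/ffunP => k; apply: val_inj => /=.
case: (unliftP ord_max k) => [j ->|->]; first by rewrite complete_composition_lift ffunE.
rewrite complete_composition_last; under eq_bigr => j _ do rewrite ffunE.
move: sum_mm; rewrite (bigD1_ord ord_max) //= => sum_eq.
by rewrite -[X in (X - _)%N]sum_eq addnK.
Qed.

Theorem corollary3p3 (p a N : nat) (hp : prime p) (hodd : odd p)
  (ha : (1 <= a)%N) (hN : (0 < N)%N) (hpN : (p %| N)%N) :
  \sum_(b < a.+1) ('C(a, b)%:R : rat) * Fsum a b [::] (2 * N) p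
  = (N%:R / (a.+1)%:R) * Zsum a.+1 N p.
Proof.
rewrite binomial_sum_Fsum_nil sum_even_ffun mulr_sumr.
under eq_bigr => m _ do rewrite Fweight_double // mulrC divfK ?expf_neq0 ?pnatr_eq0 //.
rewrite -sum_last_part_weight mulrAC mul_Zsum_last_part mulrAC mulfV ?mul1r //.
by rewrite pnatr_eq0.
Qed.
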